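(* Let $\mathbf{M}=\langle M,+,\vee,\wedge,0,1,-1\rangle$ be a unital commutative distributive $\ell$-monoid. The following are equivalent: (1) $\mathbf{M}$ is cancellative, i.e. for all $x,y,z\in M$, $x+z=y+z$ implies $x=y$; (2) for all $x,y,z\in\{w\in M\mid 0\le w\le 1\}$, if $x+z=y+z$ then $x=y$; (3) for all $x,y,z\in\Gamma(\mathbf{M})$, if $x\oplus z=y\oplus z$ and $x\odot z=y\odot z$ then $x=y$.
   Context: A \emph{unital commutative distributive $\ell$-monoid} is an algebra $\langle M,+,\vee,\wedge,0,1,-1\rangle$ (arities $2,2,2,0,0,0$) such that: $\langle M,\vee,\wedge\rangle$ is a distributive lattice (with order $\le$); $\langle M,+,0\rangle$ is a commutative monoid; $+$ distributes over $\vee$ and $\wedge$; $-1+1=0$; $-1\le 0\le 1$; and for every $x\in M$ there is $n\in\mathbb{N}\setminus\{0\}$ with $(-1)+\dots+(-1)\le x\le 1+\dots+1$ ($n$ summands each). For such $\mathbf{M}$, $\Gamma(\mathbf{M})$ is the set $\{x\in M\mid 0\le x\le 1\}$ with $\vee,\wedge,0,1$ restricted and $x\oplus y:=(x+y)\wedge 1$, $x\odot y:=(x+y+(-1))\vee 0$. *)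

From Stdlib Require Import Arith.

Record UCDLMonoid := {
  carrier :> Type;
  madd : carrier -> carrier -> carrier;
  mjoin : carrier -> carrier -> carrier;
  mmeet : carrier -> carrier -> carrier;
  mzero : carrier;
  mone : carrier;
  mmone : carrier;
  join_assoc : forall x y z, mjoin x (mjoin y z) = mjoin (mjoin x y) z;
  join_comm : forall x y, mjoin x y = mjoin y x;
  meet_assoc : forall x y z, mmeet x (mmeet y z) = mmeet (mmeet x y) z;
  meet_comm : forall x y, mmeet x y = mmeet y x;
  join_meet_absorb : forall x y, mjoin x (mmeet x y) = x;
  meet_join_absorb : forall x y, mmeet x (mjoin x y) = x;
  meet_join_distr : forall x y z,
      mmeet x (mjoin y z) = mjoin (mmeet x y) (mmeet x z);
  add_assoc : forall x y z, madd x (madd y z) = madd (madd x y) z;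
  add_comm : forall x y, madd x y = madd y x;
  add_0l : forall x, madd mzero x = x;
  add_join_distr : forall x y z, madd x (mjoin y z) = mjoin (madd x y) (madd x z);
  add_meet_distr : forall x y z, madd x (mmeet y z) = mmeet (madd x y) (madd x z);
  mone_inv : madd mmone mone = mzero;
  (* -1 <= 0 <= 1, with x <= y := x v y = y *)
  mmone_le0 : mjoin mmone mzero = mzero;
  zero_le1 : mjoin mzero mone = mone;
  (* strong unit condition: n-fold sums *)
  unit_bound : forall x, exists n, 0 < n /\
      mjoin (Nat.iter n (madd mmone) mzero) x = x /\
      mjoin x (Nat.iter n (madd mone) mzero) = Nat.iter n (madd mone) mzero
}.

Arguments madd {_}. Arguments mjoin {_}. Arguments mmeet {_}.
Arguments mzero {_}. Arguments mone {_}. Arguments mmone {_}.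

Definition mle {M : UCDLMonoid} (x y : M) : Prop := mjoin x y = y.

(* Gamma(M) operations *)
Definition moplus {M : UCDLMonoid} (x y : M) : M := mmeet (madd x y) mone.
Definition modot {M : UCDLMonoid} (x y : M) : M :=
  mjoin (madd (madd x y) mmone) mzero.

Definition in_unit_interval {M : UCDLMonoid} (x : M) : Prop :=
  mle mzero x /\ mle x mone.

(* (1) => (2) and (3) => (2) are immediate. For (2) => (3), the sum x + z is
   recovered from (x + z) /\ 1 = x (+) z and (x + z) \/ 1 = (x (.) z) + 1
   by cancellation in the distributive lattice.

   For (2) => (1), every element lands in an interval [0, m] after adding n
   for suitable n, and 1 and n are invertible. An element w of [0, m+1]
   splits as w + 1 = (w /\ 1) + (w \/ 1), with w /\ 1 in [0, 1] and
   (w \/ 1) - 1 in [0, m]. Induction on m along this splitting shows first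
   that each z in [0, 1] cancels from elements of [0, m] (compare
   (x + z) /\ (1 + z) and (x + z) \/ (1 + z)), hence from all elements,
   and then that every element of [0, m] is cancellable. *)
From Stdlib Require Import Arith Lia.

Local Infix "+m" := madd (at level 50, left associativity).
Local Infix "⊔" := mjoin (at level 40, left associativity).
Local Infix "⊓" := mmeet (at level 40, left associativity).
Local Infix "≤" := mle (at level 70).

Local Arguments add_assoc {_}. Local Arguments add_comm {_}.
Local Arguments add_0l {_}. Local Arguments add_join_distr {_}.
Local Arguments add_meet_distr {_}. Local Arguments mone_inv {_}.
Local Arguments join_assoc {_}. Local Arguments join_comm {_}.
Local Arguments meet_assoc {_}. Local Arguments meet_comm {_}.
Local Arguments join_meet_absorb {_}. Local Arguments meet_join_absorb {_}.
Local Arguments meet_join_distr {_}. Local Arguments mmone_le0 {_}.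
Local Arguments zero_le1 {_}.

Section UCDLMonoidTheory.

Variable M : UCDLMonoid.
Implicit Types a b c x y z w : M.

Lemma add_0r x : x +m mzero = x.
Proof. rewrite add_comm; apply add_0l. Qed.

Lemma add_add_swap a b c d : (a +m b) +m (c +m d) = (a +m c) +m (b +m d).
Proof.
  rewrite !add_assoc; f_equal. rewrite <- !add_assoc; f_equal. apply add_comm.
Qed.

Lemma add_mmone_one x : x +m mmone +m mone = x.
Proof. rewrite <- add_assoc, mone_inv; apply add_0r. Qed.

Lemma add_one_mmone x : x +m mone +m mmone = x.
Proof. rewrite <- add_assoc, (add_comm mone), mone_inv; apply add_0r. Qed.

Lemma join_idem x : x ⊔ x = x.
Proof. rewrite <- (meet_join_absorb x x) at 2; apply join_meet_absorb. Qed.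

Lemma le_refl x : x ≤ x.
Proof. apply join_idem. Qed.

Lemma le_trans x y z : x ≤ y -> y ≤ z -> x ≤ z.
Proof. unfold mle; intros Hxy Hyz. rewrite <- Hyz, join_assoc, Hxy; reflexivity. Qed.

Lemma le_antisym x y : x ≤ y -> y ≤ x -> x = y.
Proof. unfold mle; intros Hxy Hyx. rewrite <- Hxy, <- Hyx at 1; apply join_comm. Qed.

Lemma le_meet_eq x y : x ≤ y -> x ⊓ y = x.
Proof. unfold mle; intros Hxy. rewrite <- Hxy; apply meet_join_absorb. Qed.

Lemma meet_eq_le x y : x ⊓ y = x -> x ≤ y.
Proof.
  unfold mle; intros Hxy. rewrite <- Hxy, join_comm, meet_comm; apply join_meet_absorb.
Qed.

Lemma le_join_l x y : x ≤ x ⊔ y.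
Proof. unfold mle. rewrite join_assoc, join_idem; reflexivity. Qed.

Lemma le_join_r x y : y ≤ x ⊔ y.
Proof. rewrite join_comm; apply le_join_l. Qed.

Lemma join_lub x y z : x ≤ z -> y ≤ z -> x ⊔ y ≤ z.
Proof. unfold mle; intros Hxz Hyz. rewrite <- join_assoc, Hyz, Hxz; reflexivity. Qed.

Lemma meet_le_l x y : x ⊓ y ≤ x.
Proof. unfold mle. rewrite join_comm; apply join_meet_absorb. Qed.

Lemma meet_le_r x y : x ⊓ y ≤ y.
Proof. rewrite meet_comm; apply meet_le_l. Qed.

Lemma meet_glb x y z : z ≤ x -> z ≤ y -> z ≤ x ⊓ y.
Proof.
  intros Hzx Hzy; apply meet_eq_le.
  rewrite meet_assoc, (le_meet_eq _ _ Hzx), (le_meet_eq _ _ Hzy); reflexivity.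
Qed.

Lemma add_le_mono_r x y z : x ≤ y -> x +m z ≤ y +m z.
Proof.
  unfold mle; intros Hxy.
  rewrite (add_comm x), (add_comm y), <- add_join_distr, Hxy; reflexivity.
Qed.

Lemma add_le_mono_l x y z : x ≤ y -> z +m x ≤ z +m y.
Proof. intros Hxy. rewrite (add_comm z x), (add_comm z y); apply add_le_mono_r, Hxy. Qed.

Lemma lattice_cancel a b c : a ⊓ c = b ⊓ c -> a ⊔ c = b ⊔ c -> a = b.
Proof.
  intros Hmeet Hjoin.
  transitivity (a ⊓ (b ⊔ c)).
  { rewrite <- Hjoin; symmetry; apply meet_join_absorb. }
  rewrite meet_join_distr, Hmeet, (meet_comm a b), <- meet_join_distr, Hjoin.
  apply meet_join_absorb.
Qed.

Lemma join0_add_meet0 c : (c ⊔ mzero) +m (c ⊓ mzero) = c.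
Proof.
  apply le_antisym.
  - rewrite (add_comm (c ⊔ mzero)), add_join_distr, add_0r.
    apply join_lub; [| apply meet_le_l].
    rewrite <- (add_0l c) at 3; apply add_le_mono_r, meet_le_r.
  - rewrite add_meet_distr, add_0r.
    apply meet_glb; [| apply le_join_l].
    rewrite <- (add_0l c) at 1; apply add_le_mono_r, le_join_r.
Qed.

(* Shift [join0_add_meet0] by 1, using that 1 is invertible. *)
Lemma meet1_add_join1 z : (z ⊓ mone) +m (z ⊔ mone) = z +m mone.
Proof.
  set (c := z +m mmone).
  assert (Hz : z = c +m mone) by (symmetry; apply add_mmone_one).
  assert (Hmeet : z ⊓ mone = (c ⊓ mzero) +m mone).
  { rewrite (add_comm _ mone), add_meet_distr, add_0r, (add_comm mone), <- Hz.
    reflexivity. }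
  assert (Hjoin : z ⊔ mone = (c ⊔ mzero) +m mone).
  { rewrite (add_comm _ mone), add_join_distr, add_0r, (add_comm mone), <- Hz.
    reflexivity. }
  rewrite Hmeet, Hjoin, add_add_swap, (add_comm (c ⊓ mzero)), join0_add_meet0,
    add_assoc, <- Hz.
  reflexivity.
Qed.

Lemma oplus_odot_determine_sum x y z :
  moplus x z = moplus y z -> modot x z = modot y z -> x +m z = y +m z.
Proof.
  unfold moplus, modot; intros Hoplus Hodot.
  assert (Hjoin : forall a, a ⊔ mone = ((a +m mmone) ⊔ mzero) +m mone).
  { intros a. rewrite (add_comm _ mone), add_join_distr, add_0r,
      (add_comm mone), add_mmone_one.
    reflexivity. }
  apply (lattice_cancel _ _ mone); [exact Hoplus |].
  rewrite !Hjoin, Hodot; reflexivity.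
Qed.

Definition nat_mult (n : nat) a : M := Nat.iter n (madd a) mzero.

Lemma nat_mult_add m n a : nat_mult (m + n) a = nat_mult m a +m nat_mult n a.
Proof.
  induction m as [|m IH]; simpl.
  - symmetry; apply add_0l.
  - fold (nat_mult (m + n) a) (nat_mult m a). rewrite IH; apply add_assoc.
Qed.

Lemma nat_mult_addr n a b : nat_mult n a +m nat_mult n b = nat_mult n (a +m b).
Proof.
  induction n as [|n IH]; simpl.
  - apply add_0l.
  - fold (nat_mult n a) (nat_mult n b) (nat_mult n (a +m b)).
    rewrite add_add_swap, IH; reflexivity.
Qed.

Lemma nat_mult_zero n : nat_mult n mzero = mzero.
Proof.
  induction n as [|n IH]; simpl; [reflexivity |].
  fold (nat_mult n mzero). rewrite IH; apply add_0l.
Qed.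

Lemma nat_mult_ge0 n a : mzero ≤ a -> mzero ≤ nat_mult n a.
Proof.
  intros Ha; induction n as [|n IH]; simpl; [apply le_refl |].
  fold (nat_mult n a). rewrite <- (add_0l mzero).
  apply (le_trans _ (a +m mzero)); [apply add_le_mono_r, Ha | apply add_le_mono_l, IH].
Qed.

Lemma nat_mult_le0 n a : a ≤ mzero -> nat_mult n a ≤ mzero.
Proof.
  intros Ha; induction n as [|n IH]; simpl; [apply le_refl |].
  fold (nat_mult n a). rewrite <- (add_0l mzero).
  apply (le_trans _ (a +m mzero)); [apply add_le_mono_l, IH | apply add_le_mono_r, Ha].
Qed.

Lemma nat_mult_le_mono m n a : mzero ≤ a -> m <= n -> nat_mult m a ≤ nat_mult n a.
Proof.
  intros Ha Hmn. replace n with (m + (n - m)) by lia.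
  rewrite nat_mult_add, <- (add_0r (nat_mult m a)) at 1.
  apply add_le_mono_l, nat_mult_ge0, Ha.
Qed.

Lemma nat_mult_le_anti m n a : a ≤ mzero -> m <= n -> nat_mult n a ≤ nat_mult m a.
Proof.
  intros Ha Hmn. replace n with (m + (n - m)) by lia.
  rewrite nat_mult_add, <- (add_0r (nat_mult m a)), <- add_assoc, add_0l.
  apply add_le_mono_l, nat_mult_le0, Ha.
Qed.

Lemma nat_mult_one_mmone n : nat_mult n mone +m nat_mult n mmone = mzero.
Proof. rewrite nat_mult_addr, (add_comm mone), mone_inv; apply nat_mult_zero. Qed.

Definition bounded (n : nat) x : Prop := mzero ≤ x /\ x ≤ nat_mult n mone.

Lemma bounded_0 x : bounded 0 x -> x = mzero.
Proof. intros [Hlo Hhi]; apply le_antisym; assumption. Qed.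

Lemma exists_bounded_shift x y : exists n,
  bounded (n + n) (x +m nat_mult n mone) /\ bounded (n + n) (y +m nat_mult n mone).
Proof.
  assert (Hshift : forall k n a, k <= n ->
            nat_mult k mmone ≤ a -> a ≤ nat_mult k mone ->
            bounded (n + n) (a +m nat_mult n mone)).
  { intros k n a Hkn Hlo Hhi; split.
    - rewrite <- (nat_mult_one_mmone n), add_comm.
      apply add_le_mono_r, (le_trans _ _ _ (nat_mult_le_anti _ _ _ mmone_le0 Hkn) Hlo).
    - rewrite nat_mult_add.
      apply add_le_mono_r, (le_trans _ _ _ Hhi (nat_mult_le_mono _ _ _ zero_le1 Hkn)). }
  destruct (unit_bound M x) as [a [_ [Hxlo Hxhi]]].
  destruct (unit_bound M y) as [b [_ [Hylo Hyhi]]].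
  exists (a + b); split.
  - apply (Hshift a); [lia | assumption | assumption].
  - apply (Hshift b); [lia | assumption | assumption].
Qed.

Lemma bounded_succ_split m w : bounded (S m) w ->
  in_unit_interval (w ⊓ mone) /\ bounded m ((w ⊔ mone) +m mmone).
Proof.
  intros [Hlo Hhi].
  assert (Hnm : nat_mult (S m) mone = mone +m nat_mult m mone) by reflexivity.
  assert (Hm_ge0 : mzero ≤ nat_mult m mone) by apply nat_mult_ge0, zero_le1.
  split; [split |].
  - apply meet_glb; [exact Hlo | apply zero_le1].
  - apply meet_le_r.
  - split.
    + rewrite <- mone_inv, add_comm. apply add_le_mono_r, le_join_r.
    + rewrite <- (add_one_mmone (nat_mult m mone)), (add_comm _ mone), <- Hnm.
      apply add_le_mono_r, join_lub; [exact Hhi |].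
      rewrite Hnm, <- (add_0r mone) at 1. apply add_le_mono_l, Hm_ge0.
Qed.

Lemma add_shuffle x a b : x +m a +m b = x +m b +m a.
Proof. rewrite <- !add_assoc, (add_comm a); reflexivity. Qed.

Definition cancellable z : Prop := forall x y, x +m z = y +m z -> x = y.

Lemma cancellable_add a b : cancellable a -> cancellable b -> cancellable (a +m b).
Proof. intros Ha Hb x y Hxy. apply Ha, Hb. rewrite <- !add_assoc; exact Hxy. Qed.

Lemma cancellable_add_inv_l a b : cancellable (a +m b) -> cancellable a.
Proof. intros Hab x y Hxy. apply Hab. rewrite !add_assoc, Hxy; reflexivity. Qed.

Lemma cancellable_invertible a w : a +m w = mzero -> cancellable a.
Proof.
  intros Hw x y Hxy.
  rewrite <- (add_0r x), <- (add_0r y), <- Hw, !add_assoc, Hxy; reflexivity.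
Qed.

Section UnitIntervalCancellation.

Hypothesis unit_interval_cancel : forall x y z,
  in_unit_interval x -> in_unit_interval y -> in_unit_interval z ->
  x +m z = y +m z -> x = y.

Lemma unit_interval_cancel_bounded m x y z : in_unit_interval z ->
  bounded m x -> bounded m y -> x +m z = y +m z -> x = y.
Proof.
  intros Hz; revert x y.
  induction m as [|m IH]; intros x y Hx Hy Hxy.
  { rewrite (bounded_0 _ Hx), (bounded_0 _ Hy); reflexivity. }
  destruct (bounded_succ_split _ _ Hx) as [Hx_meet Hx_join].
  destruct (bounded_succ_split _ _ Hy) as [Hy_meet Hy_join].
  apply (lattice_cancel _ _ mone).
  - apply (unit_interval_cancel _ _ z); try assumption.
    rewrite !(add_comm _ z), !add_meet_distr, !(add_comm z), Hxy; reflexivity.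
  - rewrite <- (add_mmone_one (x ⊔ mone)), <- (add_mmone_one (y ⊔ mone)).
    f_equal; apply IH; try assumption.
    rewrite !(add_shuffle _ mmone), !(add_comm _ z), !add_join_distr,
      !(add_comm z), Hxy.
    reflexivity.
Qed.

Lemma cancellable_unit_interval z : in_unit_interval z -> cancellable z.
Proof.
  intros Hz x y Hxy.
  destruct (exists_bounded_shift x y) as [n [Hx Hy]].
  apply (cancellable_invertible _ _ (nat_mult_one_mmone n)).
  apply (unit_interval_cancel_bounded _ _ _ z Hz Hx Hy).
  rewrite !(add_shuffle _ (nat_mult n mone)), Hxy; reflexivity.
Qed.

Lemma cancellable_bounded m z : bounded m z -> cancellable z.
Proof.
  revert z; induction m as [|m IH]; intros w Hw.
  { rewrite (bounded_0 _ Hw). intros x y; rewrite !add_0r; trivial. }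
  destruct (bounded_succ_split _ _ Hw) as [Hw_meet Hw_join].
  apply (cancellable_add_inv_l _ mone); rewrite <- meet1_add_join1.
  apply cancellable_add; [apply cancellable_unit_interval, Hw_meet |].
  rewrite <- (add_mmone_one (w ⊔ mone)).
  apply cancellable_add; [apply IH, Hw_join |].
  apply (cancellable_invertible _ mmone). rewrite add_comm; apply mone_inv.
Qed.

Lemma cancellable_of_unit_interval_cancel z : cancellable z.
Proof.
  destruct (exists_bounded_shift z z) as [n [Hz _]].
  exact (cancellable_add_inv_l _ _ (cancellable_bounded _ _ Hz)).
Qed.

End UnitIntervalCancellation.

End UCDLMonoidTheory.

Theorem mainTheorem2 (M : UCDLMonoid) :
  let P1 := forall x y z : M, madd x z = madd y z -> x = y in
  let P2 := forall x y z : M, in_unit_interval x -> in_unit_interval y ->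
              in_unit_interval z -> madd x z = madd y z -> x = y in
  let P3 := forall x y z : M, in_unit_interval x -> in_unit_interval y ->
              in_unit_interval z -> moplus x z = moplus y z ->
              modot x z = modot y z -> x = y in
  (P1 <-> P2) /\ (P2 <-> P3).
Proof.
  intros P1 P2 P3; split; split.
  - intros H1 x y z _ _ _; apply H1.
  - intros H2 x y z; apply (cancellable_of_unit_interval_cancel M H2).
  - intros H2 x y z Hx Hy Hz Hoplus Hodot.
    apply (H2 x y z Hx Hy Hz), oplus_odot_determine_sum; assumption.
  - intros H3 x y z Hx Hy Hz Hxz.
    apply (H3 x y z Hx Hy Hz); unfold moplus, modot; rewrite Hxz; reflexivity.
Qed.
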